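(* Let $\varphi$ be a finite conjunction of literals of the two forms $x\in y$ and $x = y\setminus z$ (with $x,y,z$ set variables), with finite set of variables $\mathrm{Vars}(\varphi)$. Let $M$ be a set assignment over $\mathrm{Vars}(\varphi)$ satisfying $\varphi$; let $\bar x,\bar y\in\mathrm{Vars}(\varphi)$, let $\overline{M}$ be a set assignment over $\mathrm{Vars}(\varphi)$ satisfying $\varphi$ with $\overline{M}\bar x\neq \overline{M}\bar y$, and let $\mathfrak{t}$ be a set belonging to exactly one of $\overline{M}\bar x$, $\overline{M}\bar y$. Fix a set $\mathfrak{s}$ with $\mathrm{rk}(\mathfrak{s})>\mathrm{rk}(M)$. Define $\mathsf{V}_0=\{u\in\mathrm{Vars}(\varphi)\mid \mathfrak{t}\in\overline{M}u\}$; $\mathsf{V}_n=\{u\in\mathrm{Vars}(\varphi)\mid Mu\cap\{Mw\mid w\in\mathsf{V}_{n-1}\}\neq\emptyset\}$ for $n\ge1$; $M_0v=Mv\cup\{\mathfrak{s}\}$ if $v\in\mathsf{V}_0$ and $M_0v=Mv$ otherwise; for $n\ge1$, $M_nv=M_{n-1}v\cup\{M_{n-1}u\mid u\in\mathsf{V}_{n-1},\ Mu\in Mv\}$ if $v\in\mathsf{V}_n$ and $M_nv=M_{n-1}v$ otherwise. Then for all $n\in\mathbb{N}$ and $x,y\in\mathrm{Vars}(\varphi)$, if $x\in\mathsf{V}_n$ and $Mx\in My$, then $y\in\mathsf{V}_{n+1}$ and $M_nx\in M_{n+1}y$.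
   Context: A set assignment is a map from a finite set of set variables into the von Neumann universe $\mathcal{V}=\bigcup_\alpha\mathcal{V}_\alpha$, $\mathcal{V}_\alpha=\bigcup_{\beta<\alpha}\mathcal{P}(\mathcal{V}_\beta)$; it satisfies $x\in y$ iff $Mx\in My$ and $x=y\setminus z$ iff $Mx=My\setminus Mz$. The rank $\mathrm{rk}(s)$ of a set $s$ is the least ordinal $\alpha$ with $s\subseteq\mathcal{V}_\alpha$, and $\mathrm{rk}(M)=\max\{\mathrm{rk}(Mx)\mid x\in\mathrm{dom}(M)\}$. *)

(* The von Neumann universe is modelled by Aczel's
   well-founded trees (sets as (index type, element family)), with
   extensional equality eqV and membership memV defined by recursion. *)
From Stdlib Require Import List ClassicalEpsilon.
Import ListNotations.

Inductive V : Type := sup : forall (A : Type), (A -> V) -> V.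

Definition idx (a : V) : Type := match a with sup A _ => A end.
Definition elt (a : V) : idx a -> V := match a with sup _ f => f end.

Fixpoint eqV (a b : V) {struct a} : Prop :=
  match a, b with
  | sup A f, sup B g =>
      (forall i, exists j, eqV (f i) (g j)) /\ (forall j, exists i, eqV (f i) (g j))
  end.

Definition memV (x y : V) : Prop := exists j : idx y, eqV x (elt y j).

Definition unionV (a b : V) : V :=
  sup (idx a + idx b) (fun p => match p with inl i => elt a i | inr j => elt b j end).

Definition singV (x : V) : V := sup unit (fun _ => x).

Definition diffV (a b : V) : V :=
  sup {i : idx a | ~ memV (elt a i) b} (fun p => elt a (proj1_sig p)).

Definition succV (o : V) : V := unionV o (singV o).

(** rank: rk(a) = ⋃_{x ∈ a} (rk(x) + 1), a von Neumann ordinal; this is the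
    least α with a ⊆ V_α. *)
Fixpoint rk (a : V) : V :=
  match a with
  | sup A f =>
      sup {i : A & idx (succV (rk (f i)))}
          (fun p => elt (succV (rk (f (projT1 p)))) (projT2 p))
  end.

Definition rk_lt (a b : V) : Prop := memV (rk a) (rk b).

Definition var := nat.

Inductive literal : Type :=
| LMem  : var -> var -> literal
| LDiff : var -> var -> var -> literal.

Definition formula := list literal.

Definition lit_vars (l : literal) : list var :=
  match l with LMem x y => [x; y] | LDiff x y z => [x; y; z] end.

Definition inVars (phi : formula) (u : var) : Prop :=
  exists l, In l phi /\ In u (lit_vars l).

(** a set assignment (meaningful on Vars(φ)) *)
Definition assignment := var -> V.

Definition sat_lit (M : assignment) (l : literal) : Prop :=
  match l with
  | LMem x y => memV (M x) (M y)
  | LDiff x y z => eqV (M x) (diffV (M y) (M z))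
  end.

Definition satisfies (M : assignment) (phi : formula) : Prop :=
  forall l, In l phi -> sat_lit M l.

(** rk(s) > rk(M) = max { rk(Mx) | x ∈ Vars(φ) } *)
Definition rank_gt_assignment (phi : formula) (M : assignment) (s : V) : Prop :=
  forall x, inVars phi x -> rk_lt (M x) s.

Fixpoint Vset (phi : formula) (M Mbar : assignment) (t : V) (n : nat) (u : var) : Prop :=
  match n with
  | 0 => inVars phi u /\ memV t (Mbar u)
  | S m => inVars phi u /\
           exists e, memV e (M u) /\
             exists w, Vset phi M Mbar t m w /\ eqV e (M w)
  end.

Definition step_set (phi : formula) (M Mbar : assignment) (t : V) (m : nat)
  (Mprev : assignment) (v : var) : V :=
  sup {u : var | Vset phi M Mbar t m u /\ memV (M u) (M v)}
      (fun p => Mprev (proj1_sig p)).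

Fixpoint Mseq (phi : formula) (M Mbar : assignment) (t s : V) (n : nat) : assignment :=
  match n with
  | 0 => fun v =>
      if excluded_middle_informative (Vset phi M Mbar t 0 v)
      then unionV (M v) (singV s) else M v
  | S m => fun v =>
      let Mprev := Mseq phi M Mbar t s m in
      if excluded_middle_informative (Vset phi M Mbar t (S m) v)
      then unionV (Mprev v) (step_set phi M Mbar t m Mprev v)
      else Mprev v
  end.

(* Since Mx ∈ My with x ∈ V_n, the element Mx of My witnesses y ∈ V_(n+1);
   M_(n+1) y then contains M_n x among the sets it adds to M_n y. *)
From Stdlib Require Import ClassicalEpsilon.

Lemma eqV_refl (a : V) : eqV a a.
Proof.
  revert a; fix IH 1; intros [A f]; simpl.
  split; intros i; exists i; apply IH.
Qed.

Lemma memV_unionV_r (a b x : V) : memV x b -> memV x (unionV a b).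
Proof.
  intros [j Hj]; now exists (inr j).
Qed.

Section Construction.

Variables (phi : formula) (M Mbar : assignment) (t s : V).

Lemma Vset_succ_of_memV (m : nat) (x y : var) :
  Vset phi M Mbar t m x -> inVars phi y -> memV (M x) (M y) ->
  Vset phi M Mbar t (S m) y.
Proof.
  intros Hx Hy Hxy; split; [exact Hy |].
  exists (M x); split; [exact Hxy |].
  exists x; split; [exact Hx | apply eqV_refl].
Qed.

Lemma memV_step_set (m : nat) (Mprev : assignment) (u v : var) :
  Vset phi M Mbar t m u -> memV (M u) (M v) ->
  memV (Mprev u) (step_set phi M Mbar t m Mprev v).
Proof.
  intros Hu Huv; exists (exist _ u (conj Hu Huv)); apply eqV_refl.
Qed.

Lemma Mseq_succ_Vset (m : nat) (v : var) :
  Vset phi M Mbar t (S m) v ->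
  Mseq phi M Mbar t s (S m) v =
  unionV (Mseq phi M Mbar t s m v)
         (step_set phi M Mbar t m (Mseq phi M Mbar t s m) v).
Proof.
  intros Hv; cbn [Mseq].
  destruct (excluded_middle_informative (Vset phi M Mbar t (S m) v));
    [reflexivity | contradiction].
Qed.

End Construction.

Theorem lemma9 (phi : formula) (M Mbar : assignment) (xb yb : var) (t s : V) :
  satisfies M phi ->
  satisfies Mbar phi ->
  inVars phi xb -> inVars phi yb ->
  ~ eqV (Mbar xb) (Mbar yb) ->
  ((memV t (Mbar xb) /\ ~ memV t (Mbar yb)) \/
   (memV t (Mbar yb) /\ ~ memV t (Mbar xb))) ->
  rank_gt_assignment phi M s ->
  forall (n : nat) (x y : var),
    inVars phi x -> inVars phi y ->
    Vset phi M Mbar t n x -> memV (M x) (M y) ->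
    Vset phi M Mbar t (S n) y /\
    memV (Mseq phi M Mbar t s n x) (Mseq phi M Mbar t s (S n) y).
Proof.
  intros _ _ _ _ _ _ _ n x y _ Hy Hx Hxy.
  assert (HVy : Vset phi M Mbar t (S n) y)
    by exact (Vset_succ_of_memV phi M Mbar t n x y Hx Hy Hxy).
  split; [exact HVy |].
  rewrite (Mseq_succ_Vset phi M Mbar t s n y HVy).
  apply memV_unionV_r, memV_step_set; assumption.
Qed.
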